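(* Let $N\in\mathbb N$ and let $X$ be a real Banach space of dimension $2^N+1$ with a dual skipped 1-unconditional basis $(f_k)_{k=1}^{2^N+1}$. Suppose $\mathrm{ubc}(f_1,f_{2^N+1})=\mu>1$. Then $\mathrm{ubc}(f_j)_{j=1}^{2^N+1}\ge1+2^N(\mu-1)$.
   Context: A basic sequence $(e_k)_{k=1}^N$ ($1\le N\le\infty$) is skipped $\lambda$-unconditional if whenever $0=m_0<m_1<\dots<m_n<\infty$ with $m_j-m_{j-1}\ge2$ for $1\le j\le n$, and $y_j\in[e_i]_{i=m_{j-1}+1}^{m_j-1}$ (spans taken only over indices $i\le N$), then $\|\sum_{j=1}^n\epsilon_jy_j\|\le\lambda\|\sum_{j=1}^ny_j\|$ for all signs $\epsilon_j=\pm1$. A basis $(f_k)_{k=1}^M$ of a finite-dimensional space $F$ is dual skipped $\lambda$-unconditional if its dual (biorthogonal) basis $(f_k^* )_{k=1}^M$ in $F^*$ is skipped $\lambda$-unconditional. For a finite linearly independent sequence $(f_j)_{j\in A}$, $\mathrm{ubc}(f_j)_{j\in A}$ is the least $K$ such that $\|\sum_{j\in A}\epsilon_ja_jf_j\|\le K\|\sum_{j\in A}a_jf_j\|$ for all scalars $a_j$ and signs $\epsilon_j=\pm1$. *)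

From Stdlib Require Import Reals.
Open Scope R_scope.

(* Model: an n-dimensional real normed space X with basis (f_k)_{k=1}^n is
   identified (isometrically) with coefficient vectors a : nat -> R (only the
   coordinates 1..n matter), with norm  nrm a := || sum_{k=1}^n a_k f_k ||.
   The basis vector f_k is the k-th unit coefficient vector. *)

Fixpoint sumR (n : nat) (F : nat -> R) : R :=
  match n with
  | O => 0
  | S m => sumR m F + F (S m)
  end.

Record is_norm (n : nat) (nrm : (nat -> R) -> R) : Prop := {
  nrm_ext : forall a b, (forall k, (1 <= k <= n)%nat -> a k = b k) -> nrm a = nrm b;
  nrm_nonneg : forall a, 0 <= nrm a;
  nrm_def : forall a, nrm a = 0 -> forall k, (1 <= k <= n)%nat -> a k = 0;
  nrm_hom : forall c a, nrm (fun k => c * a k) = Rabs c * nrm a;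
  nrm_tri : forall a b, nrm (fun k => a k + b k) <= nrm a + nrm b
}.

(* Functionals on X: phi = sum_k b_k fstar_k  acts by  phi(a) = sum_k b_k a_k.
   dual_le n nrm b c  <->  ||phi|| in X-dual <= c. *)
Definition dual_le (n : nat) (nrm : (nat -> R) -> R) (b : nat -> R) (c : R) : Prop :=
  forall a, Rabs (sumR n (fun k => b k * a k)) <= c * nrm a.

(* dualnorm psi <= lam * dualnorm phi  (the dual norm is the least such c). *)
Definition dual_norm_le (n : nat) (nrm : (nat -> R) -> R)
  (psi : nat -> R) (lam : R) (phi : nat -> R) : Prop :=
  forall c, dual_le n nrm phi c -> dual_le n nrm psi (lam * c).

(* The dual basis (fstar_k)_{k=1}^n is skipped lam-unconditional. Blocks
   y_1..y_nb, y_j in span{fstar_i : m_{j-1} < i < m_j, i <= n}. *)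
Definition dual_skipped_unc (n : nat) (nrm : (nat -> R) -> R) (lam : R) : Prop :=
  forall (nb : nat) (m : nat -> nat) (y : nat -> nat -> R) (eps : nat -> R),
    m O = O ->
    (forall j, (1 <= j <= nb)%nat -> (m (j - 1) + 2 <= m j)%nat) ->
    (forall j k, (1 <= j <= nb)%nat -> y j k <> 0 ->
        (m (j - 1) < k < m j)%nat /\ (k <= n)%nat) ->
    (forall j, eps j = 1 \/ eps j = -1) ->
    dual_norm_le n nrm
      (fun k => sumR nb (fun j => eps j * y j k)) lam
      (fun k => sumR nb (fun j => y j k)).

Definition ubc_bound (nrm : (nat -> R) -> R) (A : nat -> Prop) (K : R) : Prop :=
  forall (a eps : nat -> R),
    (forall j, eps j = 1 \/ eps j = -1) ->
    (forall k, ~ A k -> a k = 0) ->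
    nrm (fun k => eps k * a k) <= K * nrm a.

Definition is_ubc (nrm : (nat -> R) -> R) (A : nat -> Prop) (K : R) : Prop :=
  ubc_bound nrm A K /\ forall K', ubc_bound nrm A K' -> K <= K'.

From Stdlib Require Import Reals Lra Lia Psatz Arith FunctionalExtensionality Classical.
Open Scope R_scope.

(* Proof of Lemma 5.3.  Write n = 2^N + 1, K = ubc(f_j)_{j=1}^n, and let
   alt h be the sign pattern (-1)^((i-1)/h), so that alt (2^N) is the sign
   change (+,-) on the pair {1, n}.  We show by induction on k <= N that for u
   supported on the progression P_k = {1, 1 + 2^k, 1 + 2*2^k, ...},
       nrm (alt (2^k) u) <= (1 + (K - 1) / 2^k) nrm u,
   which for k = N gives mu <= 1 + (K - 1) / 2^N, the claim.  For the step, let h = 2^k and u supported on P_{k+1}.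
   By Hahn-Banach (distance formula) alt (2h) u can be corrected at the midpoints
   1 + h + j 2h to a vector u' with nrm u' <= nrm u, because every norm-one
   functional vanishing at the midpoints can, by dual skipped 1-unconditionality
   (the midpoints are the skipped indices), have its blocks' signs alternated;
   then alt (2h) u = (u' + alt h u') / 2 with u' supported on P_k. *)

Lemma sumR_ext n F G : (forall k, (1 <= k <= n)%nat -> F k = G k) -> sumR n F = sumR n G.
Proof.
  induction n as [|n IH]; simpl; intros H; auto.
  rewrite IH by (intros; apply H; lia). rewrite H by lia. reflexivity.
Qed.

Lemma sumR_scal n c F : sumR n (fun k => c * F k) = c * sumR n F.
Proof. induction n as [|n IH]; simpl; [ring|]. rewrite IH. ring. Qed.

Lemma sumR_zero n F : (forall k, (1 <= k <= n)%nat -> F k = 0) -> sumR n F = 0.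
Proof.
  intros H. rewrite (sumR_ext n F (fun _ => 0 * 0)) by (intros; rewrite H by lia; ring).
  rewrite sumR_scal. ring.
Qed.

Lemma sumR_single n j0 (P : nat -> bool) G :
  (1 <= j0 <= n)%nat -> P j0 = true ->
  (forall j, (1 <= j <= n)%nat -> P j = true -> j = j0) ->
  sumR n (fun j => if P j then G j else 0) = G j0.
Proof.
  induction n as [|n IH]; intros Hj HP Hu; [lia|]. simpl.
  destruct (Nat.eq_dec j0 (S n)) as [->|Hne].
  - rewrite HP, sumR_zero; [ring|].
    intros k Hk. destruct (P k) eqn:E; auto. specialize (Hu k ltac:(lia) E). lia.
  - rewrite IH by (auto; lia || (intros; apply Hu; auto; lia)).
    destruct (P (S n)) eqn:E; [|ring]. specialize (Hu (S n) ltac:(lia) E). lia.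
Qed.

Definition unit_vec (j i : nat) : R := if Nat.eqb i j then 1 else 0.

Lemma sumR_unit_vec n b a i :
  (1 <= i <= n)%nat -> sumR n (fun k => b k * (a * unit_vec i k)) = a * b i.
Proof.
  intros Hi. rewrite (sumR_ext n _ (fun k => if Nat.eqb k i then a * b k else 0)).
  - apply (sumR_single n i (fun k => Nat.eqb k i) (fun k => a * b k)); auto.
    + apply Nat.eqb_refl.
    + intros j _ E; apply Nat.eqb_eq; auto.
  - intros k _. unfold unit_vec. destruct (Nat.eqb k i); ring.
Qed.

Section Norm.
Variables (n : nat) (nrm : (nat -> R) -> R).
Hypothesis Hn : is_norm n nrm.

Lemma nrm_vanish a : (forall k, (1 <= k <= n)%nat -> a k = 0) -> nrm a = 0.
Proof.
  intros Ha.
  rewrite (nrm_ext _ _ Hn a (fun k => 0 * a k)) by (intros k Hk; rewrite (Ha k Hk); ring).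
  rewrite (nrm_hom _ _ Hn), Rabs_R0. ring.
Qed.

Lemma nrm_opp a : nrm (fun k => - a k) = nrm a.
Proof.
  rewrite (nrm_ext _ _ Hn _ (fun k => -1 * a k)) by (intros; ring).
  rewrite (nrm_hom _ _ Hn), Rabs_left by lra. ring.
Qed.

Lemma nrm_pos_scal c a : 0 <= c -> nrm (fun k => c * a k) = c * nrm a.
Proof. intros Hc. rewrite (nrm_hom _ _ Hn), Rabs_right by lra. reflexivity. Qed.

End Norm.

(* Hahn-Banach in R^n.  A partially defined linear functional is given by its
   graph Phi (Phi w l means "the functional maps w to l"); it is dominated by
   the norm if l <= nrm w on its graph. *)

Definition linear_graph (Phi : (nat -> R) -> R -> Prop) : Prop :=
  Phi (fun _ => 0) 0 /\
  (forall w1 l1 w2 l2, Phi w1 l1 -> Phi w2 l2 -> Phi (fun i => w1 i + w2 i) (l1 + l2)) /\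
  (forall a w l, Phi w l -> Phi (fun i => a * w i) (a * l)).

Definition dominated (nrm : (nat -> R) -> R) (Phi : (nat -> R) -> R -> Prop) : Prop :=
  forall w l, Phi w l -> l <= nrm w.

Definition extend_graph (Phi : (nat -> R) -> R -> Prop) (v : nat -> R) (c : R)
  : (nat -> R) -> R -> Prop :=
  fun w' l' => exists w l s, Phi w l /\ w' = (fun i => w i + s * v i) /\ l' = l + s * c.

Lemma extend_graph_linear Phi v c : linear_graph Phi -> linear_graph (extend_graph Phi v c).
Proof.
  intros [H0 [Hadd Hsc]]. split; [|split].
  - exists (fun _ => 0), 0, 0. split; auto. split; [apply functional_extensionality; intros|]; ring.
  - intros w1 l1 w2 l2 [a1 [k1 [s1 [P1 [-> ->]]]]] [a2 [k2 [s2 [P2 [-> ->]]]]].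
    exists (fun i => a1 i + a2 i), (k1 + k2), (s1 + s2). split; auto.
    split; [apply functional_extensionality; intros|]; ring.
  - intros a w l [a1 [k1 [s1 [P1 [-> ->]]]]].
    exists (fun i => a * a1 i), (a * k1), (a * s1). split; auto.
    split; [apply functional_extensionality; intros|]; ring.
Qed.

Section HahnBanach.
Variables (n : nat) (nrm : (nat -> R) -> R).
Hypothesis Hn : is_norm n nrm.

(* One-step extension: a dominated functional extends to one more direction,
   the value c being any point between the sup of l - nrm (w - v) and the inf
   of nrm (w + v) - l over the graph. *)
Lemma hb_one_step Phi v :
  linear_graph Phi -> dominated nrm Phi ->
  exists c, dominated nrm (extend_graph Phi v c).
Proof.
  intros [H0 [Hadd Hsc]] Hdom.
  set (E := fun y => exists w l, Phi w l /\ y = l - nrm (fun i => w i - v i)).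
  assert (Hsep : forall w l w' l', Phi w l -> Phi w' l' ->
            l - nrm (fun i => w i - v i) <= nrm (fun i => w' i + v i) - l').
  { intros w l w' l' H1 H2.
    pose proof (Hdom _ _ (Hadd _ _ _ _ H1 H2)) as D.
    pose proof (nrm_tri _ _ Hn (fun i => w i - v i) (fun i => w' i + v i)) as T.
    rewrite (nrm_ext _ _ Hn _ (fun i => w i + w' i)) in T by (intros; ring).
    lra. }
  destruct (completeness E) as [c [Hub Hlub]].
  { exists (nrm (fun i => 0 + v i) - 0). intros y [w [l [Hw ->]]]. apply Hsep; auto. }
  { exists (0 - nrm (fun i => 0 - v i)), (fun _ => 0), 0. auto. }
  assert (Hlo : forall w l, Phi w l -> l - nrm (fun i => w i - v i) <= c).
  { intros w l Hw. apply Hub. exists w, l; auto. }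
  assert (Hhi : forall w l, Phi w l -> c <= nrm (fun i => w i + v i) - l).
  { intros w l Hw. apply Hlub. intros y [w' [l' [Hw' ->]]]. apply Hsep; auto. }
  exists c. intros w' l' [w [l [s [Hw [-> ->]]]]].
  destruct (Rtotal_order s 0) as [Hs|[->|Hs]].
  - (* s < 0: the lower bound at w / (-s), rescaled *)
    pose proof (Hlo _ _ (Hsc (/ - s) _ _ Hw)) as L.
    rewrite (nrm_ext _ _ Hn _ (fun i => - s * (/ - s * w i - v i)))
      by (intros; field; lra).
    rewrite (nrm_pos_scal n nrm Hn) by lra.
    assert (l = - s * (/ - s * l)) by (field; lra). nra.
  - rewrite (nrm_ext _ _ Hn _ w) by (intros; ring).
    pose proof (Hdom _ _ Hw). lra.
  - pose proof (Hhi _ _ (Hsc (/ s) _ _ Hw)) as L.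
    rewrite (nrm_ext _ _ Hn _ (fun i => s * (/ s * w i + v i))) by (intros; field; lra).
    rewrite (nrm_pos_scal n nrm Hn) by lra.
    assert (l = s * (/ s * l)) by (field; lra). nra.
Qed.

Definition trunc (m : nat) (x : nat -> R) (i : nat) : R :=
  if andb (Nat.leb 1 i) (Nat.leb i m) then x i else 0.

Lemma trunc_in m x k : (1 <= k <= m)%nat -> trunc m x k = x k.
Proof.
  intros H; unfold trunc.
  replace (Nat.leb 1 k) with true by (symmetry; apply Nat.leb_le; lia).
  replace (Nat.leb k m) with true by (symmetry; apply Nat.leb_le; lia). reflexivity.
Qed.

Lemma trunc_0 x k : trunc 0 x k = 0.
Proof.
  unfold trunc. destruct (Nat.leb 1 k) eqn:E1, (Nat.leb k 0) eqn:E2; auto.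
  apply Nat.leb_le in E1; apply Nat.leb_le in E2; lia.
Qed.

Lemma trunc_S m x i :
  trunc (S m) x i = x (S m) * unit_vec (S m) i + trunc m x i.
Proof.
  unfold trunc, unit_vec. destruct (Nat.eqb i (S m)) eqn:E.
  - apply Nat.eqb_eq in E; subst i.
    replace (Nat.leb (S m) m) with false by (symmetry; apply Nat.leb_gt; lia).
    rewrite Nat.leb_refl. simpl. ring.
  - apply Nat.eqb_neq in E.
    destruct (Nat.leb 1 i); simpl; [|ring].
    destruct (Nat.leb i m) eqn:E1, (Nat.leb i (S m)) eqn:E2; try ring.
    + apply Nat.leb_le in E1; apply Nat.leb_gt in E2; lia.
    + apply Nat.leb_gt in E1; apply Nat.leb_le in E2; lia.
Qed.

Lemma hb_coords m : forall Phi,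
  linear_graph Phi -> dominated nrm Phi ->
  exists b, forall w l x, Phi w l ->
    l + sumR m (fun i => b i * x i) <= nrm (fun i => w i + trunc m x i).
Proof.
  induction m as [|m IH]; intros Phi HL Hdom.
  - exists (fun _ => 0). intros w l x Hw. simpl.
    rewrite (nrm_ext _ _ Hn _ w) by (intros; rewrite trunc_0; ring).
    pose proof (Hdom _ _ Hw). lra.
  - destruct (hb_one_step Phi (unit_vec (S m)) HL Hdom) as [c Hc].
    destruct (IH _ (extend_graph_linear _ (unit_vec (S m)) c HL) Hc) as [b' Hb'].
    exists (fun i => if Nat.eqb i (S m) then c else b' i).
    intros w l x Hw. simpl. rewrite Nat.eqb_refl.
    rewrite (sumR_ext m _ (fun i => b' i * x i)).
    2:{ intros k Hk. destruct (Nat.eqb k (S m)) eqn:E; auto. apply Nat.eqb_eq in E; lia. }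
    assert (HP : extend_graph Phi (unit_vec (S m))  c
                   (fun i => w i + x (S m) * unit_vec (S m) i) (l + x (S m) * c)).
    { exists w, l, (x (S m)). auto. }
    pose proof (Hb' _ _ x HP) as T.
    rewrite (nrm_ext _ _ Hn _ (fun i => w i + x (S m) * unit_vec (S m) i + trunc m x i))
      by (intros; rewrite trunc_S; ring).
    lra.
Qed.

Lemma hahn_banach Phi :
  linear_graph Phi -> dominated nrm Phi ->
  exists b, dual_le n nrm b 1 /\
    forall w l, Phi w l -> sumR n (fun i => b i * w i) = l.
Proof.
  intros HL Hdom. destruct (hb_coords n Phi HL Hdom) as [b Hb].
  destruct HL as [H0 [_ Hsc]].
  assert (Hx : forall w l x, Phi w l ->
             l + sumR n (fun i => b i * x i) <= nrm (fun i => w i + x i)).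
  { intros w l x Hw. rewrite (nrm_ext _ _ Hn _ (fun i => w i + trunc n x i))
      by (intros; rewrite trunc_in; auto). auto. }
  assert (Hneg : forall x, sumR n (fun i => b i * - x i) = - sumR n (fun i => b i * x i)).
  { intros x. replace (- sumR n _) with (-1 * sumR n (fun i => b i * x i)) by ring.
    rewrite <- sumR_scal. apply sumR_ext; intros; ring. }
  exists b. split.
  - intros a. pose proof (Hx _ _ a H0) as T1. pose proof (Hx _ _ (fun i => - a i) H0) as T2.
    cbn beta in T2.
    rewrite (nrm_ext _ _ Hn _ a) in T1 by (intros; ring).
    rewrite (nrm_ext _ _ Hn _ (fun i => - a i)), (nrm_opp n nrm Hn), Hneg in T2
      by (intros; ring).
    apply Rabs_le. lra.
  - intros w l Hw.
    pose proof (Hx _ _ (fun i => - w i) Hw) as T1.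
    pose proof (Hx _ _ w (Hsc (-1) _ _ Hw)) as T2. cbn beta in T1, T2.
    rewrite Hneg, (nrm_vanish n nrm Hn) in T1 by (intros; ring).
    rewrite (nrm_vanish n nrm Hn) in T2 by (intros; ring).
    lra.
Qed.

End HahnBanach.

Definition supported_in (M : nat -> Prop) (c : nat -> R) : Prop :=
  forall i, c i <> 0 -> M i.

Lemma supported_in_lin M a c1 c2 :
  supported_in M c1 -> supported_in M c2 -> supported_in M (fun i => a * c1 i + c2 i).
Proof.
  intros S1 S2 i H. destruct (Req_dec (c1 i) 0) as [E|E]; [apply S2 | apply S1; auto].
  rewrite E in H. lra.
Qed.

Lemma dist_by_duality n nrm (M : nat -> Prop) (v : nat -> R) (R0 : R) :
  is_norm n nrm ->
  (forall i, M i -> (1 <= i <= n)%nat) -> 0 <= R0 ->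
  (forall b, dual_le n nrm b 1 -> (forall i, M i -> b i = 0) ->
     sumR n (fun i => b i * v i) <= R0) ->
  forall d, 0 < d ->
    exists c, supported_in M c /\ nrm (fun i => v i + c i) <= R0 + d.
Proof.
  intros Hn HM HR0 Hb d Hd.
  apply NNPP. intros Hno. set (r := R0 + d).
  assert (Hfar : forall c, supported_in M c -> r < nrm (fun i => v i + c i)).
  { intros c Hs. apply Rnot_le_lt. intros Hle. apply Hno. exists c; auto. }
  (* the functional t v + c |-> t r on span{v} + span{e_i : i in M} *)
  set (Phi := fun w l => exists t c, supported_in M c /\
                w = (fun i => t * v i + c i) /\ l = t * r).
  assert (HL : linear_graph Phi).
  { split; [|split].
    - exists 0, (fun _ => 0). split; [intros i H; lra|].
      split; [apply functional_extensionality; intros|]; ring.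
    - intros w1 l1 w2 l2 [t1 [c1 [S1 [-> ->]]]] [t2 [c2 [S2 [-> ->]]]].
      exists (t1 + t2), (fun i => 1 * c1 i + c2 i). split; [apply supported_in_lin; auto|].
      split; [apply functional_extensionality; intros|]; ring.
    - intros a w l [t1 [c1 [S1 [-> ->]]]].
      exists (a * t1), (fun i => a * c1 i + 0). split.
      + apply supported_in_lin; auto. intros i H; lra.
      + split; [apply functional_extensionality; intros|]; ring. }
  assert (Hdom : dominated nrm Phi).
  { intros w l [t [c [S [-> ->]]]].
    destruct (Rle_lt_dec t 0) as [Ht|Ht].
    - pose proof (nrm_nonneg _ _ Hn (fun i => t * v i + c i)).
      assert (0 <= r) by (unfold r; lra). nra.
    - rewrite (nrm_ext _ _ Hn _ (fun i => t * (v i + (/ t * c i + 0)))) by (intros; field; lra).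
      rewrite (nrm_pos_scal n nrm Hn) by lra.
      assert (r < nrm (fun i => v i + (/ t * c i + 0))).
      { apply Hfar, supported_in_lin; auto. intros i H; lra. }
      nra. }
  destruct (hahn_banach n nrm Hn Phi HL Hdom) as [b [Hb1 Hbe]].
  assert (Hvan : forall i, M i -> b i = 0).
  { intros i Hi.
    assert (P : Phi (fun k => 0 * v k + 1 * unit_vec i k) (0 * r)).
    { exists 0, (fun k => 1 * unit_vec i k). split; auto.
      intros k H. unfold unit_vec in H. destruct (Nat.eqb k i) eqn:E.
      - apply Nat.eqb_eq in E; subst; auto.
      - exfalso; apply H; ring. }
    pose proof (Hbe _ _ P) as E.
    rewrite (sumR_ext n _ (fun k => b k * (1 * unit_vec i k))), sumR_unit_vec in E
      by (auto; intros; ring).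
    lra. }
  assert (P1 : Phi (fun k => 1 * v k + 0) (1 * r)).
  { exists 1, (fun _ => 0). split; auto. intros k H; exfalso; apply H; auto. }
  pose proof (Hbe _ _ P1) as E.
  rewrite (sumR_ext n _ (fun k => b k * v k)) in E by (intros; ring).
  pose proof (Hb b Hb1 Hvan). unfold r in E. lra.
Qed.

Definition par_sign (m : nat) : R := if Nat.even m then 1 else -1.

Lemma par_sign_pm m : par_sign m = 1 \/ par_sign m = -1.
Proof. unfold par_sign. destruct (Nat.even m); auto. Qed.

(* For a spacing h, the skipped indices are
   skip_pt h j = 1 + h + (j - 1) * 2h (j >= 1), and block j is the open interval
   between skip_pt h (j - 1) and skip_pt h j; it contains 1 + (j - 1) * 2h. *)
Definition skip_pt (h j : nat) : nat :=
  match j with O => O | S j' => (1 + h + j' * (2 * h))%nat end.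

Lemma skip_pt_mono h a b : (a <= b)%nat -> (skip_pt h a <= skip_pt h b)%nat.
Proof.
  intros H. destruct a, b; simpl; try lia.
  assert (a * (2 * h) <= b * (2 * h))%nat by (apply Nat.mul_le_mono_r; lia). lia.
Qed.

Definition in_block (n h j i : nat) : bool :=
  andb (andb (Nat.ltb (skip_pt h (j - 1)) i) (Nat.ltb i (skip_pt h j))) (Nat.leb i n).

Lemma in_block_spec n h j i : in_block n h j i = true <->
  (skip_pt h (j - 1) < i /\ i < skip_pt h j /\ i <= n)%nat.
Proof.
  unfold in_block. rewrite !Bool.andb_true_iff, Nat.ltb_lt, Nat.ltb_lt, Nat.leb_le. tauto.
Qed.

Lemma in_block_uniq n h i j j' : (1 <= j)%nat -> (1 <= j')%nat ->
  in_block n h j i = true -> in_block n h j' i = true -> j = j'.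
Proof.
  intros H1 H2 B1 B2. apply in_block_spec in B1, B2.
  destruct (Nat.lt_trichotomy j j') as [L|[L|L]]; auto; exfalso.
  - pose proof (skip_pt_mono h j (j' - 1) ltac:(lia)). lia.
  - pose proof (skip_pt_mono h j' (j - 1) ltac:(lia)). lia.
Qed.

Lemma in_block_exists n h J i : (1 <= h)%nat -> n = (1 + 2 * h * J)%nat ->
  (1 <= i <= n)%nat -> ~ (exists j, i = 1 + h + j * (2 * h))%nat ->
  exists j0, (1 <= j0 <= S J)%nat /\ in_block n h j0 i = true.
Proof.
  intros Hh HnJ Hi Hns.
  set (x := (i - 1 + h)%nat).
  pose proof (Nat.div_mod_eq x (2 * h)) as Ed.
  pose proof (Nat.mod_upper_bound x (2 * h) ltac:(lia)) as Er.
  set (q := (x / (2 * h))%nat) in *. set (r := (x mod (2 * h))%nat) in *.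
  assert (Hq : (q <= J)%nat).
  { unfold q. apply Nat.lt_succ_r, Nat.Div0.div_lt_upper_bound; unfold x; nia. }
  exists (S q). split; [lia|]. apply in_block_spec. simpl. rewrite Nat.sub_0_r.
  split; [|split; [unfold x in Ed; nia | lia]].
  destruct q as [|q']; simpl; [lia|].
  assert (r <> 0)%nat.
  { intros Hr. apply Hns. exists q'. unfold x in Ed. rewrite Hr in Ed. nia. }
  unfold x in Ed. nia.
Qed.

Lemma in_block_home n h J j : (1 <= h)%nat -> n = (1 + 2 * h * J)%nat ->
  (1 + j * (2 * h) <= n)%nat ->
  (1 <= S j <= S J)%nat /\ in_block n h (S j) (1 + j * (2 * h)) = true.
Proof.
  intros Hh HnJ Hj. split.
  - split; [lia|]. destruct (Nat.le_gt_cases j J) as [|G]; [lia|].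
    assert (S J * (2 * h) <= j * (2 * h))%nat by (apply Nat.mul_le_mono_r; lia). nia.
  - apply in_block_spec. simpl. rewrite Nat.sub_0_r. destruct j; simpl; nia.
Qed.

Lemma dual_le_ext n nrm b b' c : dual_le n nrm b c ->
  (forall i, (1 <= i <= n)%nat -> b i = b' i) -> dual_le n nrm b' c.
Proof.
  intros H E a. rewrite (sumR_ext n _ (fun k => b k * a k)) by (intros; rewrite E; auto).
  apply H.
Qed.

Lemma flip_blocks n nrm h J b :
  dual_skipped_unc n nrm 1 ->
  (1 <= h)%nat -> n = (1 + 2 * h * J)%nat ->
  dual_le n nrm b 1 ->
  (forall i j, (1 <= i <= n)%nat -> i = (1 + h + j * (2 * h))%nat -> b i = 0) ->
  exists psi, dual_le n nrm psi 1 /\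
    forall j, (1 + j * (2 * h) <= n)%nat ->
      psi (1 + j * (2 * h))%nat = par_sign j * b (1 + j * (2 * h))%nat.
Proof.
  intros Hsk Hh HnJ Hb Hvan.
  set (y := fun j i => if in_block n h j i then b i else 0).
  set (eps := fun j => par_sign (j - 1)).
  assert (Hflip : dual_norm_le n nrm (fun k => sumR (S J) (fun j => eps j * y j k)) 1
                    (fun k => sumR (S J) (fun j => y j k))).
  { apply (Hsk (S J) (skip_pt h) y eps eq_refl).
    - intros [|[|j]] Hj; simpl; lia.
    - intros j k _ H. unfold y in H. destruct (in_block n h j k) eqn:E; [|lra].
      apply in_block_spec in E. lia.
    - intros j. apply par_sign_pm. }
  exists (fun k => sumR (S J) (fun j => eps j * y j k)). split.
  - replace 1 with (1 * 1) by ring. apply Hflip.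
    apply (dual_le_ext _ _ b); auto.
    intros i Hi. unfold y.
    destruct (Req_dec (b i) 0) as [Z|NZ].
    + rewrite sumR_zero; auto. intros j _. destruct (in_block n h j i); auto.
    + assert (Hns : ~ (exists j, i = 1 + h + j * (2 * h))%nat).
      { intros [j Hj]. apply NZ. eapply Hvan; eauto. }
      destruct (in_block_exists n h J i Hh HnJ Hi Hns) as [j0 [Hj0 Hb0]].
      symmetry. apply (sumR_single _ j0 (fun j => in_block n h j i) (fun _ => b i)); auto.
      intros j Hj E. eapply in_block_uniq; eauto; lia.
  - intros j Hj. unfold y.
    rewrite (sumR_ext _ _ (fun j0 => if in_block n h j0 (1 + j * (2 * h))%nat
                                    then eps j0 * b (1 + j * (2 * h))%nat else 0))
      by (intros k _; destruct (in_block n h k _); ring).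
    destruct (in_block_home n h J j Hh HnJ Hj) as [Hr Hin].
    rewrite (sumR_single _ (S j)); auto.
    + unfold eps. simpl. rewrite Nat.sub_0_r. reflexivity.
    + intros j' Hj' E. eapply in_block_uniq; eauto; lia.
Qed.

Definition alt (h i : nat) : R := par_sign ((i - 1) / h).

Lemma alt_at h m : (h <> 0)%nat -> alt h (1 + m * h) = par_sign m.
Proof.
  intros Hh. unfold alt. replace (1 + m * h - 1)%nat with (m * h)%nat by lia.
  rewrite Nat.div_mul; auto.
Qed.

Lemma par_sign_double j : par_sign (2 * j) = 1.
Proof. unfold par_sign. rewrite Nat.even_mul. reflexivity. Qed.

Lemma par_sign_odd j : par_sign (1 + 2 * j) = -1.
Proof. unfold par_sign. rewrite Nat.even_add, Nat.even_mul. reflexivity. Qed.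

Definition on_lattice (n s : nat) (u : nat -> R) : Prop :=
  supported_in (fun i => (1 <= i <= n)%nat /\ exists j, i = (1 + j * s)%nat) u.

(* The vector u' is alt (2h) u corrected at the midpoints 1 + h + j * 2h; the
   correction exists by the distance formula, since by flip_blocks every norm-one
   functional vanishing at the midpoints takes at alt (2h) u a value at most nrm u. *)
Lemma halving_step n nrm h J u d :
  is_norm n nrm -> dual_skipped_unc n nrm 1 ->
  (1 <= h)%nat -> n = (1 + 2 * h * J)%nat ->
  on_lattice n (2 * h) u -> 0 < d ->
  exists u', on_lattice n h u' /\ nrm u' <= nrm u + d /\
    forall i, alt (2 * h) i * u i = / 2 * (u' i + alt h i * u' i).
Proof.
  intros Hn Hsk Hh HnJ Hu Hd.
  set (M := fun i => (1 <= i <= n)%nat /\ exists j, i = (1 + h + j * (2 * h))%nat).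
  set (v := fun i => alt (2 * h) i * u i).
  assert (Hdual : forall b, dual_le n nrm b 1 -> (forall i, M i -> b i = 0) ->
                    sumR n (fun i => b i * v i) <= nrm u).
  { intros b Hb Hv.
    destruct (flip_blocks n nrm h J b Hsk Hh HnJ Hb) as [psi [Hpsi Hpv]].
    { intros i j Hi Ei. apply Hv. split; eauto. }
    rewrite (sumR_ext n _ (fun i => psi i * u i)).
    - pose proof (Hpsi u). pose proof (Rle_abs (sumR n (fun i => psi i * u i))). lra.
    - intros i Hi. unfold v. destruct (Req_dec (u i) 0) as [Z|NZ]; [rewrite Z; ring|].
      destruct (Hu i NZ) as [Hr [j ->]].
      rewrite Hpv, alt_at by lia. ring. }
  destruct (dist_by_duality n nrm M v (nrm u) Hn ltac:(intros i [Hi _]; exact Hi)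
              (nrm_nonneg _ _ Hn u) Hdual d Hd) as [c [Hc Hcn]].
  (* the supports of v and c are the even and odd points of the step-h progression *)
  assert (Hv : forall i, v i <> 0 -> exists j, i = (1 + (2 * j) * h)%nat /\ (1 <= i <= n)%nat).
  { intros i Hi. destruct (Req_dec (u i) 0) as [Z|NZ].
    - exfalso. apply Hi. unfold v. rewrite Z. ring.
    - destruct (Hu i NZ) as [Hr [j ->]]. exists j. split; auto. lia. }
  assert (Hc' : forall i, c i <> 0 -> exists j, i = (1 + (1 + 2 * j) * h)%nat /\ (1 <= i <= n)%nat).
  { intros i Hi. destruct (Hc i Hi) as [Hr [j ->]]. exists j. split; auto. lia. }
  exists (fun i => v i + c i). split; [|split; auto].
  - intros i Hi. destruct (Req_dec (c i) 0) as [Z|NZ].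
    + assert (v i <> 0) by (rewrite Z in Hi; lra).
      destruct (Hv i H) as [j [-> Hr]]. split; eauto.
    + destruct (Hc' i NZ) as [j [-> Hr]]. split; eauto.
  - intros i. fold (v i).
    destruct (Req_dec (c i) 0) as [Z|NZ].
    + rewrite Z. destruct (Req_dec (v i) 0) as [Z2|NZ2]; [rewrite Z2; ring|].
      destruct (Hv i NZ2) as [j [-> _]]. rewrite alt_at, par_sign_double by lia. field.
    + destruct (Hc' i NZ) as [j [Ei _]].
      assert (Zv : v i = 0).
      { destruct (Req_dec (v i) 0) as [|NZ2]; auto. exfalso.
        destruct (Hv i NZ2) as [j' [Ej' _]].
        assert (((2 * j') * h = (1 + 2 * j) * h)%nat) by lia.
        apply Nat.mul_cancel_r in H; lia. }
      rewrite Zv, Ei, alt_at, par_sign_odd by lia. ring.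
Qed.

Definition step_bound (K : R) (k : nat) : R := 1 + (K - 1) / 2 ^ k.

Lemma step_bound_ge1 K k : 1 <= K -> 1 <= step_bound K k.
Proof.
  intros HK. unfold step_bound, Rdiv.
  assert (0 < / 2 ^ k) by (apply Rinv_0_lt_compat, pow_lt; lra). nra.
Qed.

Lemma step_bound_S K k : step_bound K (S k) = / 2 * (1 + step_bound K k).
Proof.
  unfold step_bound. simpl. field. apply pow_nonzero. lra.
Qed.

Lemma le_of_le_plus_eps a b C : 0 <= C -> (forall d, 0 < d -> a <= C * (b + d)) -> a <= C * b.
Proof.
  intros HC H. destruct (Rle_lt_dec a (C * b)) as [|L]; auto. exfalso.
  destruct (Req_dec C 0) as [Z|NZ].
  - subst. specialize (H 1 ltac:(lra)). lra.
  - specialize (H ((a - C * b) / (2 * C)) ltac:(apply Rdiv_lt_0_compat; lra)).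
    replace (C * (b + (a - C * b) / (2 * C))) with (C * b + (a - C * b) / 2) in H
      by (field; lra).
    lra.
Qed.

Lemma ubc_bound_ge1 n nrm (A : nat -> Prop) K j :
  is_norm n nrm -> ubc_bound nrm A K -> (1 <= j <= n)%nat -> A j -> 1 <= K.
Proof.
  intros Hn HK Hj HA.
  assert (Hsupp : forall k, ~ A k -> unit_vec j k = 0).
  { intros k Hk. unfold unit_vec. destruct (Nat.eqb k j) eqn:E; auto.
    apply Nat.eqb_eq in E; subst; contradiction. }
  pose proof (HK (unit_vec j) (fun _ => 1) ltac:(auto) Hsupp) as T.
  rewrite (nrm_ext _ _ Hn _ (unit_vec j)) in T by (intros; ring).
  assert (P : 0 < nrm (unit_vec j)).
  { destruct (nrm_nonneg _ _ Hn (unit_vec j)) as [|Z]; auto. exfalso.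
    pose proof (nrm_def _ _ Hn (unit_vec j) (eq_sym Z) j Hj) as W.
    unfold unit_vec in W. rewrite Nat.eqb_refl in W. lra. }
  nra.
Qed.

Section Induction.
Variables (N : nat) (nrm : (nat -> R) -> R) (K : R).
Hypothesis Hn : is_norm (2 ^ N + 1)%nat nrm.
Hypothesis Hsk : dual_skipped_unc (2 ^ N + 1)%nat nrm 1.
Hypothesis HK : ubc_bound nrm (fun k => (1 <= k <= 2 ^ N + 1)%nat) K.
Hypothesis HK1 : 1 <= K.

Lemma alt_bound k : (k <= N)%nat -> forall u, on_lattice (2 ^ N + 1) (2 ^ k) u ->
  nrm (fun i => alt (2 ^ k) i * u i) <= step_bound K k * nrm u.
Proof.
  induction k as [|k IH]; intros Hk u Hu.
  - unfold step_bound. simpl. replace (1 + (K - 1) / 1) with K by field.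
    apply HK.
    + intros j. apply par_sign_pm.
    + intros j Hj. destruct (Req_dec (u j) 0) as [|NZ]; auto. exfalso; apply Hj, Hu, NZ.
  - assert (HnJ : (2 ^ N + 1 = 1 + 2 * 2 ^ k * 2 ^ (N - S k))%nat).
    { replace (2 * 2 ^ k)%nat with (2 ^ S k)%nat by reflexivity.
      rewrite <- Nat.pow_add_r. replace (S k + (N - S k))%nat with N by lia. lia. }
    apply le_of_le_plus_eps; [pose proof (step_bound_ge1 K (S k) HK1); lra|].
    intros d Hd.
    destruct (halving_step _ nrm (2 ^ k) _ u d Hn Hsk
                ltac:(pose proof (Nat.pow_nonzero 2 k); lia) HnJ Hu Hd)
      as [u' [Hu' [Hnu' Eu']]].
    rewrite (nrm_ext _ _ Hn _ (fun i => / 2 * (u' i + alt (2 ^ k) i * u' i)))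
      by (intros; rewrite <- Eu'; reflexivity).
    rewrite (nrm_pos_scal _ nrm Hn) by lra.
    pose proof (nrm_tri _ _ Hn u' (fun i => alt (2 ^ k) i * u' i)) as T.
    pose proof (IH ltac:(lia) u' Hu').
    pose proof (step_bound_ge1 K k HK1).
    rewrite step_bound_S. nra.
Qed.

(* Hence ubc(f_1, f_{2^N+1}) <= 1 + (K - 1) / 2^N: on the pair {1, 2^N + 1} the
   four sign patterns are +-1 and +-alt (2^N). *)
Lemma pair_ubc_bound :
  ubc_bound nrm (fun k => k = 1%nat \/ k = (2 ^ N + 1)%nat) (step_bound K N).
Proof.
  intros a eps Heps Ha.
  assert (Hpt : forall g : nat -> R, g 1%nat = eps 1%nat ->
             g (2 ^ N + 1)%nat = eps (2 ^ N + 1)%nat ->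
             nrm (fun k => eps k * a k) = nrm (fun k => g k * a k)).
  { intros g G1 Gn. f_equal. apply functional_extensionality; intros k.
    destruct (classic (k = 1%nat \/ k = (2 ^ N + 1)%nat)) as [[->| ->]|NA].
    - rewrite G1; auto.
    - rewrite Gn; auto.
    - rewrite (Ha k NA). ring. }
  assert (Hlat : on_lattice (2 ^ N + 1) (2 ^ N) a).
  { intros i Hi. destruct (classic (i = 1%nat \/ i = (2 ^ N + 1)%nat)) as [[->| ->]|NA].
    - split; [lia|]. exists 0%nat. lia.
    - split; [lia|]. exists 1%nat. lia.
    - exfalso; apply Hi, Ha, NA. }
  assert (Halt1 : alt (2 ^ N) 1 = 1).
  { pose proof (alt_at (2 ^ N) 0 (Nat.pow_nonzero 2 N ltac:(lia))) as E.
    rewrite Nat.mul_0_l, Nat.add_0_r in E. exact E. }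
  assert (Haltn : alt (2 ^ N) (2 ^ N + 1) = -1).
  { replace (2 ^ N + 1)%nat with (1 + 1 * 2 ^ N)%nat by lia.
    rewrite alt_at by (apply Nat.pow_nonzero; lia). reflexivity. }
  pose proof (alt_bound N (le_n N) a Hlat) as T.
  pose proof (nrm_nonneg _ _ Hn a). pose proof (step_bound_ge1 K N HK1).
  destruct (Heps 1%nat) as [E1|E1]; destruct (Heps (2 ^ N + 1)%nat) as [E2|E2].
  - rewrite (Hpt (fun _ => 1)), (nrm_pos_scal _ nrm Hn) by lra. nra.
  - rewrite (Hpt (alt (2 ^ N))) by lra. exact T.
  - rewrite (Hpt (fun k => -1 * alt (2 ^ N) k)) by lra.
    rewrite (nrm_ext _ _ Hn _ (fun k => - (alt (2 ^ N) k * a k))), (nrm_opp _ nrm Hn)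
      by (intros; ring).
    exact T.
  - rewrite (Hpt (fun _ => -1)) by lra.
    rewrite (nrm_ext _ _ Hn _ (fun k => - a k)), (nrm_opp _ nrm Hn) by (intros; ring). nra.
Qed.

End Induction.

Theorem lemma5p3 (N : nat) (nrm : (nat -> R) -> R) (mu : R) :
  is_norm (2 ^ N + 1)%nat nrm ->
  dual_skipped_unc (2 ^ N + 1)%nat nrm 1 ->
  is_ubc nrm (fun k => k = 1%nat \/ k = (2 ^ N + 1)%nat) mu ->
  1 < mu ->
  forall K, is_ubc nrm (fun k => (1 <= k <= 2 ^ N + 1)%nat) K ->
    1 + 2 ^ N * (mu - 1) <= K.
Proof.
  intros Hn Hsk [_ Hmu_least] _ K [HK _].
  assert (HK1 : 1 <= K) by (apply (ubc_bound_ge1 _ nrm _ K 1 Hn HK); lia).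
  pose proof (Hmu_least _ (pair_ubc_bound N nrm K Hn Hsk HK HK1)) as Hmu.
  unfold step_bound in Hmu.
  assert (Hp : 0 < 2 ^ N) by (apply pow_lt; lra).
  replace K with (1 + 2 ^ N * ((K - 1) / 2 ^ N)) by (field; lra).
  apply Rplus_le_compat_l, Rmult_le_compat_l; lra.
Qed.
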